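(* Let $m\ge3$, $\mu\ge0$, $c\in\mathbb{R}^m_{\ge0}$, demands $d=(d_L,d_R)$ with $d_L\in\Delta^L$, $d_R\in\Delta^R$, and $C:=2(\|c\|_\infty+33\mu\log m)$, and assume $C>0$. Let $\Delta\ge0$ and let $x\in\Delta^m$ satisfy $$F(x)\le\min_{x'\in\Delta^m}F(x')+\frac{\Delta}{4C},\qquad F(x):=\frac1{4C}\langle c,x\rangle+\frac{\mu}{4C}H(x)+\frac14\|\mathbf{B}^\top x-d\|_1.$$ Let $\tilde x\in\Delta^m$ satisfy $\mathbf{B}^\top\tilde x=d$ and $\|\tilde x-x\|_1\le2\|\mathbf{B}^\top x-d\|_1$ (e.g. the output of the $\mathsf{OTRound}$ procedure of Altschuler–Weed–Rigollet applied to $x$). Then $$\langle c,\tilde x\rangle+\mu H(\tilde x)\le\mathrm{OPT}_\mu(d)+\Delta+\mu m^{-30}.$$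
   Context: $L,R$ are finite nonempty sets, $m=|L||R|$, and coordinates of $\mathbb{R}^m$ are indexed by pairs $(i,j)\in L\times R$. $\mathbf{B}\in\{0,1\}^{m\times(|L|+|R|)}$ is the unsigned edge-vertex incidence matrix of the complete bipartite graph on $L\cup R$: $\mathbf{B}_{(i,j),v}=1$ iff $v\in\{i,j\}$. $H(x)=\sum_i x_i\log x_i$ ($0\log0=0$, natural log). $\mathrm{OPT}_\mu(d)=\min_{x\in\Delta^m,\ \mathbf{B}^\top x=d}\ \langle c,x\rangle+\mu H(x)$. $\Delta^k$ denotes the probability simplex. *)

From HB Require Import structures.
From mathcomp Require Import all_boot all_order all_algebra.
From mathcomp Require Import all_classical all_reals all_analysis.
Set Implicit Arguments. Unset Strict Implicit. Unset Printing Implicit Defensive.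
Import Order.TTheory GRing.Theory Num.Theory.
Local Open Scope ring_scope.
Local Open Scope classical_set_scope.

Section Defs.
Variable R : realType.

Definition simplex (T : finType) (x : T -> R) : Prop :=
  (forall t, 0 <= x t) /\ \sum_(t : T) x t = 1.

Definition negent (T : finType) (x : T -> R) : R :=
  \sum_(t : T) (if x t == 0 then 0 else x t * ln (x t)).

Definition inner (T : finType) (c x : T -> R) : R := \sum_(t : T) c t * x t.

Definition norm1 (T : finType) (x : T -> R) : R := \sum_(t : T) `|x t|.

Definition norminf (T : finType) (x : T -> R) : R := \big[Num.max/0]_(t : T) `|x t|.

(* B^T x for the unsigned incidence matrix of the complete bipartite graph on
   L ∪ R (vertices indexed by the disjoint sum L + Rv):
   (B^T x)_v = sum of x_e over edges e incident to v. *)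
Definition BT (L Rv : finType) (x : L * Rv -> R) : L + Rv -> R :=
  fun v => \sum_(e : L * Rv) (if (v == inl e.1) || (v == inr e.2) then x e else 0).

Definition demand (L Rv : finType) (dL : L -> R) (dR : Rv -> R) : L + Rv -> R :=
  fun v => match v with inl i => dL i | inr j => dR j end.

Definition OPT (L Rv : finType) (c : L * Rv -> R) (mu : R) (d : L + Rv -> R) : R :=
  inf [set inner c x + mu * negent x | x in
        [set x : L * Rv -> R | simplex x /\ BT x = d]].

Definition Fobj (L Rv : finType) (c : L * Rv -> R) (mu C : R) (d : L + Rv -> R)
  (x : L * Rv -> R) : R :=
  (4 * C)^-1 * inner c x + mu / (4 * C) * negent x + 4^-1 * norm1 (fun v => BT x v - d v).

End Defs.

(* Compare [x] with any feasible [y]. Multiplying the near-optimality of [x]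
   for [F] by [4 C] gives [cost x + C r <= cost y + Delta], where
   [r = |B^T x - d|_1] is the infeasibility of [x]. Moving from [x] to the
   rounded point changes the linear cost by at most [|c|_oo |xt - x|_1]; the
   entropy is not Lipschitz, but the tangent-line inequality for [t ln t] at
   [K = m^-31] shows that each coordinate changes it by at most
   [31 ln m |xt_e - x_e| + m^-31]. Since [|xt - x|_1 <= 2 r], the total increase
   is at most [C r + mu m^-30], and taking the infimum over [y] concludes. *)
From HB Require Import structures.
From mathcomp Require Import all_boot all_order all_algebra.
From mathcomp Require Import all_classical all_reals all_analysis.
From mathcomp Require Import ring lra.
Set Implicit Arguments. Unset Strict Implicit. Unset Printing Implicit Defensive.
Import Order.TTheory GRing.Theory Num.Theory.
Local Open Scope ring_scope.
Local Open Scope classical_set_scope.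

Section XlnX.
Variable R : realType.
Implicit Types a b s t K : R.

Lemma ln_le_subr1 t : 0 < t -> ln t <= t - 1.
Proof.
move=> t0; have := @le_ln1Dx R (t - 1).
have -> : 1 + (t - 1) = t by rewrite addrC subrK.
by apply; lra.
Qed.

(* [ln 0 = 0] in this library, so [t * ln t] is [t log t] with [0 log 0 = 0]. *)
Lemma tangent_le_xlnx K s : 0 < K -> 0 <= s -> s * ln K + s - K <= s * ln s.
Proof.
move=> K0; rewrite le_eqVlt => /predU1P[<-|s0]; first by rewrite !mul0r add0r sub0r oppr_le0 ltW.
have := ler_wpM2l (ltW s0) (ln_le_subr1 (divr_gt0 K0 s0)).
rewrite ln_div ?posrE // !mulrBr mulr1 mulrCA mulfV ?gt_eqF // mulr1; lra.
Qed.

Lemma xlnxD_ge a b : 0 <= a -> 0 <= b -> a * ln a + b * ln b <= (a + b) * ln (a + b).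
Proof.
have mono u v : 0 <= u -> u <= v -> u * ln u <= u * ln v.
  rewrite le_eqVlt => /predU1P[<- _|u0 uv]; first by rewrite !mul0r.
  by rewrite ler_pM2l // ler_ln ?posrE // (lt_le_trans u0).
by move=> a0 b0; rewrite mulrDl lerD ?mono ?lerDl ?lerDr.
Qed.

Lemma xlnx_sub_le_sub a b : 0 <= a -> a <= b -> b <= 1 -> b * ln b - a * ln a <= b - a.
Proof.
move=> a0 ab b1; have [b0|b0] := leP b 0.
  have b_eq0 : b = 0 by apply/le_anti/andP; split; last exact: le_trans ab.
  have a_eq0 : a = 0 by apply/le_anti/andP; split; last by []; rewrite -b_eq0.
  by rewrite a_eq0 b_eq0 !mul0r subrr.
have := tangent_le_xlnx b0 a0.
have : (b - a) * ln b <= 0 by rewrite mulr_ge0_le0 ?subr_ge0 ?ln_le0.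
rewrite mulrBl; lra.
Qed.

Lemma xlnx_sub_le a b K : 0 <= a -> 0 <= b <= 1 -> 0 < K -> 1 <= - ln K ->
  b * ln b - a * ln a <= - ln K * `|b - a| + K.
Proof.
move=> a0 /andP[b0 b1] K0 lnK.
have [ab|ba] := leP a b.
  rewrite ger0_norm ?subr_ge0 //.
  have := xlnx_sub_le_sub a0 ab b1.
  have : b - a <= - ln K * (b - a) by rewrite ler_peMl ?subr_ge0.
  lra.
rewrite ltr0_norm ?subr_lt0 // opprB.
have s0 : 0 <= a - b by rewrite subr_ge0 ltW.
have := xlnxD_ge b0 s0; rewrite [b + _]addrC subrK.
have := tangent_le_xlnx K0 s0.
rewrite mulNr (mulrC (ln K)); lra.
Qed.

End XlnX.

Section Finite.
Variables (R : realType) (T : finType).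
Implicit Types x y c : T -> R.

Lemma negentE x : negent x = \sum_t x t * ln (x t).
Proof. by apply: eq_bigr => t _; case: eqP => // ->; rewrite mul0r. Qed.

Lemma simplex_le1 x t : simplex x -> x t <= 1.
Proof. by move=> [x0 <-]; rewrite (bigD1 t) //= lerDl sumr_ge0. Qed.

Lemma negent_ge x : (forall t, 0 <= x t) -> - (#|T|%:R) <= negent x.
Proof.
move=> x0; rewrite negentE -sumr_const -sumrN; apply: ler_sum => t _.
have := tangent_le_xlnx ltr01 (x0 t); rewrite ln1 mulr0 add0r.
have := x0 t; lra.
Qed.

Lemma negent_sub_le x y K : simplex x -> simplex y -> 0 < K -> 1 <= - ln K ->
  negent y - negent x <= - ln K * norm1 (fun t => y t - x t) + #|T|%:R * K.
Proof.
move=> sx sy K0 lnK; rewrite !negentE /norm1 -sumrB mulr_sumr.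
rewrite mulr_natl -sumr_const -big_split /=; apply: ler_sum => t _.
have [[x0 _] [y0 _]] := (sx, sy).
by apply: xlnx_sub_le; rewrite ?x0 ?y0 ?(simplex_le1 _ sy).
Qed.

Lemma negent_sub_le_card k x y : (3 <= #|T|)%N -> (0 < k)%N ->
  simplex x -> simplex y ->
  negent y - negent x <= ln (#|T|%:R) *+ k.+1 * norm1 (fun t => y t - x t) + #|T|%:R ^- k.
Proof.
move=> T3 k0 sx sy; set n : R := #|T|%:R.
have n3 : 3 <= n by rewrite (ler_nat R 3).
have n0 : 0 < n by lra.
have lnn : 2 / 3 <= ln n.
  have ni0 : 0 < n^-1 by rewrite invr_gt0.
  have := ln_le_subr1 ni0; rewrite lnV ?posrE //.
  have : n^-1 <= 3^-1 by rewrite lef_pV2 ?posrE.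
  lra.
have Kn : n * (n ^+ k.+1)^-1 = n ^- k.
  by rewrite exprS invfM mulrA mulfV ?mul1r ?gt_eqF.
have lnK : - ln ((n ^+ k.+1)^-1) = ln n *+ k.+1.
  by rewrite lnV ?posrE ?exprn_gt0 // opprK lnXn.
rewrite -Kn -lnK; apply: negent_sub_le; rewrite ?invr_gt0 ?exprn_gt0 // lnK.
have : 2%:R <= k.+1%:R :> R by rewrite ler_nat ltnS.
rewrite -mulr_natr; nra.
Qed.

Lemma norm1_ge0 x : 0 <= norm1 x.
Proof. exact: sumr_ge0. Qed.

Lemma norminf_ge c t : `|c t| <= norminf c.
Proof. by rewrite /norminf (bigD1 t) //= le_max lexx. Qed.

Lemma norminf_ge0 c : 0 <= norminf c.
Proof. by rewrite /norminf; elim/big_ind: _ => // u v u0 v0; rewrite le_max u0. Qed.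

Lemma inner_ge0 c x : (forall t, 0 <= c t) -> (forall t, 0 <= x t) -> 0 <= inner c x.
Proof. by move=> c0 x0; apply: sumr_ge0 => t _; rewrite mulr_ge0. Qed.

Lemma inner_sub_le c x y : inner c y - inner c x <= norminf c * norm1 (fun t => y t - x t).
Proof.
rewrite /inner /norm1 -sumrB mulr_sumr; apply: ler_sum => t _.
by rewrite -mulrBr (le_trans (ler_norm _)) // normrM ler_wpM2r ?norminf_ge.
Qed.

End Finite.

Section Bipartite.
Variables (R : realType) (L Rv : finType) (c : L * Rv -> R) (mu C : R) (d : L + Rv -> R).
Hypotheses (mu_ge0 : 0 <= mu) (c_ge0 : forall e, 0 <= c e) (C_gt0 : 0 < C).

Local Notation cost x := (inner c x + mu * negent x).
Local Notation infeas x := (norm1 (fun v => BT x v - d v)).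
Local Notation feasible := [set y : L * Rv -> R | simplex y /\ BT y = d].
Local Notation Fvalues := [set Fobj c mu C d x | x in [set x : L * Rv -> R | simplex x]].

Lemma FobjE x : Fobj c mu C d x = (cost x + C * infeas x) / (4 * C).
Proof. by rewrite /Fobj; field; rewrite gt_eqF. Qed.

Lemma Fobj_lbound : has_lbound Fvalues.
Proof.
exists ((mu * - #|{: L * Rv}|%:R) / (4 * C)) => _ [x [x0 _] <-].
rewrite FobjE ler_pM2r ?invr_gt0 ?mulr_gt0 //.
have := inner_ge0 c_ge0 x0; have := ler_wpM2l mu_ge0 (negent_ge x0).
have := mulr_ge0 (ltW C_gt0) (norm1_ge0 (fun v => BT x v - d v)).
lra.
Qed.

Lemma approx_min_cost_le x y Delta :
  Fobj c mu C d x <= inf Fvalues + Delta / (4 * C) ->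
  y \in feasible -> cost x + C * infeas x <= cost y + Delta.
Proof.
move=> Fx /set_mem[sy BTy].
have infeas_y : infeas y = 0 by rewrite /norm1 big1 // => v _; rewrite BTy subrr normr0.
have Fy : inf Fvalues <= Fobj c mu C d y by apply: ge_inf; [exact: Fobj_lbound | exists y].
have := le_trans Fx (lerD Fy (lexx (Delta / (4 * C)))).
by rewrite !FobjE infeas_y mulr0 addr0 -mulrDl ler_pM2r ?invr_gt0 ?mulr_gt0.
Qed.

Lemma OPT_ge a b : feasible !=set0 -> (forall y, y \in feasible -> a <= cost y + b) ->
  a <= OPT c mu d + b.
Proof.
move=> [y0 fy0] ab; rewrite -lerBlDr; apply: lb_le_inf.
  by exists (cost y0), y0.
by move=> _ [y fy <-]; rewrite lerBlDr; apply/ab/mem_set.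
Qed.

Lemma rounded_cost_le k x xt y Delta : (3 <= #|L| * #|Rv|)%N -> (0 < k)%N ->
  2 * (norminf c + mu * (ln ((#|L| * #|Rv|)%:R) *+ k.+1)) <= C ->
  simplex x -> Fobj c mu C d x <= inf Fvalues + Delta / (4 * C) ->
  simplex xt -> norm1 (fun e => xt e - x e) <= 2 * infeas x ->
  y \in feasible -> cost xt <= cost y + Delta + mu * ((#|L| * #|Rv|)%:R) ^- k.
Proof.
rewrite -card_prod => m3 k0 C_ge sx Fx sxt dxt fy.
set lnk := ln _ *+ _ in C_ge.
have hE := negent_sub_le_card m3 k0 sx sxt; rewrite -/lnk in hE.
have hI := inner_sub_le c x xt.
have hF := approx_min_cost_le Fx fy.
have lnk0 : 0 <= lnk.
  by rewrite mulrn_wge0 // ln_ge0 // (ler_nat R 1) (leq_trans _ m3).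
have G0 : 0 <= norminf c + mu * lnk by rewrite addr_ge0 ?norminf_ge0 ?mulr_ge0.
have hG := ler_wpM2l G0 dxt.
have hC := ler_wpM2r (norm1_ge0 (fun v => BT x v - d v)) C_ge.
have hmu := ler_wpM2l mu_ge0 hE.
move: hG hC hmu; rewrite !mulrDr !mulrDl !mulrA; lra.
Qed.

End Bipartite.

Theorem mainTheorem13 (R : realType) (L Rv : finType)
  (c : L * Rv -> R) (mu : R) (dL : L -> R) (dR : Rv -> R) (Delta : R)
  (x xt : L * Rv -> R) :
  (3 <= #|L| * #|Rv|)%N ->
  0 <= mu ->
  (forall e, 0 <= c e) ->
  simplex dL -> simplex dR ->
  let m := (#|L| * #|Rv|)%N in
  let d := demand dL dR in
  let C := 2 * (norminf c + 33 * mu * ln (m%:R : R)) in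
  0 < C ->
  0 <= Delta ->
  simplex x ->
  Fobj c mu C d x <=
    inf [set Fobj c mu C d x' | x' in [set x' : L * Rv -> R | simplex x']]
    + Delta / (4 * C) ->
  simplex xt ->
  BT xt = d ->
  norm1 (fun e => xt e - x e) <= 2 * norm1 (fun v => BT x v - d v) ->
  inner c xt + mu * negent xt <= OPT c mu d + Delta + mu * (m%:R : R) ^- 30.
Proof.
move=> m3 mu0 c0 _ _ m d C C0 _ sx Fx sxt BTxt dxt.
have lnm0 : 0 <= ln (m%:R : R) by rewrite ln_ge0 // (ler_nat R 1) (leq_trans _ m3).
have C_ge : 2 * (norminf c + mu * (ln (m%:R : R) *+ 31)) <= C.
  rewrite /C ler_pM2l // lerD2l -[_ *+ 31]mulr_natr.
  have := mulr_ge0 mu0 lnm0; lra.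
rewrite -addrA; apply: OPT_ge => //; first by exists xt.
by move=> y fy; rewrite addrA; apply: (rounded_cost_le mu0 c0 C0 m3 _ C_ge sx Fx sxt dxt).
Qed.
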